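(* Let $T$ be an almost commutative ring, $t\mapsto\bar t$ an involution on $T$ and $\lambda\in\mathrm{center}(T)$. Then $T$ is a direct limit (directed union) of involution invariant subrings $T_j$ ($j\in\Psi$) containing $\lambda$ such that for every $j\in\Psi$ there is a subring $C'_j\subseteq\mathrm{center}(T_j)$ for which $T_j$ is a Noetherian $C_j$-module, where $C_j$ is the subring of $T_j$ consisting of all finite sums of elements of the form $c\bar c$ and $-c\bar c$ with $c\in C'_j$.
   Context: Rings are associative with $1\neq0$. A ring is almost commutative if it is finitely generated as a module over its center. An involution is a map $t\mapsto\bar t$ with $\overline{t+s}=\bar t+\bar s$, $\overline{ts}=\bar s\bar t$, $\bar{\bar t}=t$; a subring is involution invariant if it is mapped into itself by the involution. *)

From HB Require Import structures.
From mathcomp Require Import all_boot all_algebra.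
Set Implicit Arguments. Unset Strict Implicit. Unset Printing Implicit Defensive.
Import GRing.Theory.
Local Open Scope ring_scope.

Section Defs.
Variable T : nzRingType.

Definition central (x : T) : Prop := forall y : T, x * y = y * x.

Definition almost_commutative : Prop :=
  exists (n : nat) (g : 'I_n -> T),
    forall x : T, exists c : 'I_n -> T,
      (forall i, central (c i)) /\ x = \sum_(i < n) c i * g i.

Definition is_involution (bar : T -> T) : Prop :=
  [/\ forall t s, bar (t + s) = bar t + bar s,
      forall t s, bar (t * s) = bar s * bar t &
      forall t, bar (bar t) = t].

Definition is_subring (S : T -> Prop) : Prop :=
  S 1 /\ forall x y, S x -> S y -> S (x - y) /\ S (x * y).

Definition inv_invariant (bar : T -> T) (S : T -> Prop) : Prop :=
  forall x, S x -> S (bar x).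

Definition psubset (A B : T -> Prop) : Prop := forall x, A x -> B x.

Definition in_center_of (C' S : T -> Prop) : Prop :=
  psubset C' S /\ forall c, C' c -> forall y, S y -> c * y = y * c.

Definition norm_sums (bar : T -> T) (C' : T -> Prop) : T -> Prop :=
  fun x => exists s : seq (bool * T),
    (forall p, p \in s -> C' p.2) /\
    x = \sum_(p <- s) (-1) ^+ p.1 * (p.2 * bar p.2).

Definition is_submodule (R M N : T -> Prop) : Prop :=
  [/\ psubset N M, N 0,
      forall x y, N x -> N y -> N (x - y) &
      forall r x, R r -> N x -> N (r * x)].

Definition noetherian_module (R M : T -> Prop) : Prop :=
  forall Ns : nat -> (T -> Prop),
    (forall n, is_submodule R M (Ns n)) ->
    (forall n, psubset (Ns n) (Ns n.+1)) ->
    exists N, forall n, (N <= n)%N -> forall x, Ns n x <-> Ns N x.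

End Defs.

From mathcomp Require Import all_boot all_algebra.
From Stdlib Require Import Classical ClassicalEpsilon Wf_nat.
Set Implicit Arguments. Unset Strict Implicit. Unset Printing Implicit Defensive.
Import GRing.Theory.
Local Open Scope ring_scope.

(* Write T = sum_i Z g_i over its center Z and fix coordinates x = sum_i c_i(x) g_i.
   For a finite list s, let K be the coordinates of the elements of s, of 1, of
   lambda, of the g_i g_k and of the bar g_i, together with their conjugates, and
   let C' be the subring generated by K: it is central and bar-stable, so
   T_s = sum_i C' g_i is a bar-invariant subring containing s and lambda, and
   these T_s form a directed family exhausting T. Every k in K is a root of
   X^2 - (k + bar k) X + k bar k, so C' is a finite module over
   A_0 = Z[k + bar k, k bar k | k in K], which is Noetherian by Hilbert's basis
   theorem; hence T_s is a Noetherian A_0-module. Finally A_0 lies in C_s, as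
   k + bar k = (1 + k)(1 + bar k) - 1 - k bar k. *)

Lemma ex_least_nat (P : nat -> Prop) :
  (exists m, P m) -> exists m, P m /\ forall k, P k -> (m <= k)%N.
Proof.
move=> /(dec_inh_nat_subset_has_unique_least_element _ (fun m => classic (P m))).
by move=> [m [[Pm m_min] _]]; exists m; split => // k /m_min /leP.
Qed.

Section Subrings.
Variable T : nzRingType.
Implicit Types (A B S R M : T -> Prop) (x y : T).

Lemma is_subring_central : is_subring (@central T).
Proof.
split=> [y|x y cx cy]; first by rewrite mul1r mulr1.
by split=> z; [rewrite mulrBl mulrBr cx cy|rewrite -mulrA cy mulrA cx mulrA].
Qed.

Section SubringClosure.
Variable S : T -> Prop.
Hypothesis subS : is_subring S.

Lemma subring1 : S 1. Proof. by case: subS. Qed.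
Lemma subringB x y : S x -> S y -> S (x - y).
Proof. by case: subS => _ closS /closS /[apply] -[]. Qed.
Lemma subringM x y : S x -> S y -> S (x * y).
Proof. by case: subS => _ closS /closS /[apply] -[]. Qed.
Lemma subring0 : S 0. Proof. by rewrite -(subrr (1 : T)); apply: subringB; apply: subring1. Qed.
Lemma subringN x : S x -> S (- x).
Proof. by rewrite -sub0r; apply: subringB subring0. Qed.
Lemma subringD x y : S x -> S y -> S (x + y).
Proof. by move=> Sx Sy; rewrite -[y]opprK; apply: subringB (subringN Sy). Qed.
Lemma subring_sum (I : Type) (r : seq I) (P : pred I) (F : I -> T) :
  (forall i, P i -> S (F i)) -> S (\sum_(i <- r | P i) F i).
Proof. by apply: big_ind; [exact: subring0|exact: subringD]. Qed.
Lemma subringX x k : S x -> S (x ^+ k).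
Proof.
by move=> Sx; elim: k => [|k IHk]; rewrite ?expr0 ?exprS; [exact: subring1|exact: subringM].
Qed.

End SubringClosure.

Definition central_subring A := is_subring A /\ forall a, A a -> central a.

Definition ints : T -> Prop := fun x => exists k : int, x = k%:~R.

Lemma ints_min S : is_subring S -> psubset ints S.
Proof.
move=> subS _ [k ->]; have Snat m : S m%:R.
  elim: m => [|m IHm]; first exact: subring0.
  by rewrite -addn1 natrD; apply: subringD IHm (subring1 subS).
by case: k => m; rewrite ?NegzE ?mulrNz; [|apply: (subringN subS)]; apply: Snat.
Qed.

Lemma central_subring_ints : central_subring ints.
Proof.
split=> [|_ [k ->] y]; last by rewrite commr_int.
split=> [|_ _ [k ->] [l ->]]; first by exists 1.
by split; [exists (k - l); rewrite intrB|exists (k * l); rewrite intrM].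
Qed.

Fixpoint lspan A (xs : seq T) : T -> Prop :=
  match xs with
  | [::] => fun y => y = 0
  | x :: xs => fun y => exists a m, [/\ A a, lspan A xs m & y = a * x + m]
  end.

Lemma lspan_scalars A B xs : psubset A B -> psubset (lspan A xs) (lspan B xs).
Proof.
move=> AB; elim: xs => [|x xs IHxs] y //= [a [m [Aa Mm ->]]].
by exists a, m; split; [apply: AB|apply: IHxs|].
Qed.

Lemma lspan_cat A xs ys y z :
  lspan A xs y -> lspan A ys z -> lspan A (xs ++ ys) (y + z).
Proof.
elim: xs y => [|x xs IHxs] y /=; first by move=> -> Mz; rewrite add0r.
by move=> [a [m [Aa Mm ->]]] Mz; exists a, (m + z); rewrite addrA; split=> //; apply: IHxs.
Qed.

Lemma lspan_mulr A xs y z : lspan A xs y -> lspan A [seq x * z | x <- xs] (y * z).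
Proof.
elim: xs y => [|x xs IHxs] y /=; first by move=> ->; rewrite mul0r.
by move=> [a [m [Aa Mm ->]]]; exists a, (m * z); rewrite mulrDl mulrA; split=> //; apply: IHxs.
Qed.

Lemma lspan_trans A B xs ys y : psubset B (lspan A xs) -> lspan B ys y ->
  lspan A [seq x * y | y <- ys, x <- xs] y.
Proof.
move=> BA; elim: ys y => [|y' ys IHys] y //= [b [m [Bb Mm ->]]].
by apply: lspan_cat; [apply/lspan_mulr/BA|apply: IHys].
Qed.

Section LinearSpan.
Variable A : T -> Prop.
Hypothesis subA : is_subring A.

Lemma lspan0 xs : lspan A xs 0.
Proof.
elim: xs => [|x xs IHxs] //=.
by exists 0, 0; rewrite mul0r addr0; split=> //; apply: subring0.
Qed.

Lemma lspanB xs y z : lspan A xs y -> lspan A xs z -> lspan A xs (y - z).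
Proof.
elim: xs y z => [|x xs IHxs] y z /=; first by move=> -> ->; rewrite subr0.
move=> [a [m [Aa Mm ->]]] [b [m' [Ab Mm' ->]]].
exists (a - b), (m - m'); split; [exact: subringB|exact: IHxs|].
by rewrite mulrBl opprD addrACA.
Qed.

Lemma lspanN xs y : lspan A xs y -> lspan A xs (- y).
Proof. by rewrite -sub0r; apply: lspanB (lspan0 xs). Qed.

Lemma lspanD xs y z : lspan A xs y -> lspan A xs z -> lspan A xs (y + z).
Proof. by move=> My Mz; rewrite -[z]opprK; apply: lspanB (lspanN Mz). Qed.

Lemma lspanZ xs r y : A r -> lspan A xs y -> lspan A xs (r * y).
Proof.
move=> Ar; elim: xs y => [|x xs IHxs] y /=; first by move=> ->; rewrite mulr0.
move=> [a [m [Aa Mm ->]]]; exists (r * a), (r * m).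
by rewrite mulrDr mulrA; split; [exact: subringM|exact: IHxs|].
Qed.

Lemma lspan_sum xs (I : Type) (r : seq I) (P : pred I) (F : I -> T) :
  (forall i, P i -> lspan A xs (F i)) -> lspan A xs (\sum_(i <- r | P i) F i).
Proof. by apply: big_ind; [exact: lspan0|exact: lspanD]. Qed.

Lemma lspan_submodule xs : is_submodule A (lspan A xs) (lspan A xs).
Proof. by split=> // [|x y|r x]; [apply: lspan0|apply: lspanB|apply: lspanZ]. Qed.

Hypothesis centralA : forall a, A a -> central a.

Lemma lspan_mull ys zs u z :
  (forall x', x' \in ys -> lspan A zs (u * x')) -> lspan A ys z -> lspan A zs (u * z).
Proof.
elim: ys z => [|y ys IHys] z /= Mu; first by move=> ->; rewrite mulr0; apply: lspan0.
move=> [b [m [Ab Mm ->]]]; rewrite mulrDr mulrA -(centralA Ab u) -mulrA.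
apply: lspanD; first by apply/lspanZ/Mu/mem_head.
by apply: IHys Mm => x' ys_x'; apply: Mu; rewrite inE ys_x' orbT.
Qed.

Lemma lspan_mul xs ys zs y z :
  (forall x x', x \in xs -> x' \in ys -> lspan A zs (x * x')) ->
  lspan A xs y -> lspan A ys z -> lspan A zs (y * z).
Proof.
elim: xs y => [|x xs IHxs] y /= Mxx'; first by move=> -> _; rewrite mul0r; apply: lspan0.
move=> [a [m [Aa Mm ->]]] Mz; rewrite mulrDl -mulrA; apply: lspanD.
  by apply/lspanZ/(lspan_mull _ Mz) => // x'; apply/Mxx'/mem_head.
by apply: IHxs Mm Mz => x1 x' xs_x1; apply: Mxx'; rewrite inE xs_x1 orbT.
Qed.

End LinearSpan.

Section Submodules.
Variables R M N : T -> Prop.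
Hypothesis subN : is_submodule R M N.

Lemma submodule_sub : psubset N M. Proof. by case: subN. Qed.
Lemma submodule0 : N 0. Proof. by case: subN. Qed.
Lemma submoduleB x y : N x -> N y -> N (x - y). Proof. by case: subN => _ _ + _; apply. Qed.
Lemma submoduleZ r x : R r -> N x -> N (r * x). Proof. by case: subN => _ _ _; apply. Qed.
Lemma submoduleN x : N x -> N (- x).
Proof. by rewrite -sub0r; apply: submoduleB submodule0. Qed.
Lemma submoduleD x y : N x -> N y -> N (x + y).
Proof. by move=> Nx Ny; rewrite -[y]opprK; apply: submoduleB (submoduleN Ny). Qed.

Lemma submodule_absz (k : int) : N k%:~R <-> N (absz k)%:R.
Proof.
case: k => m //=; rewrite NegzE mulrNz.
by split=> /submoduleN; rewrite ?opprK.
Qed.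

End Submodules.

Definition stable_from (Ns : nat -> T -> Prop) N :=
  forall n, (N <= n)%N -> psubset (Ns n) (Ns N).

Lemma chain_mono (Ns : nat -> T -> Prop) :
  (forall n, psubset (Ns n) (Ns n.+1)) -> {homo Ns : m n / (m <= n)%N >-> psubset m n}.
Proof. by move=> chainNs; apply: homo_leq => [m x //|n m p Nmn Nnp x /Nmn /Nnp|]. Qed.

Lemma stable_from_le (Ns : nat -> T -> Prop) N N' :
  (forall n, psubset (Ns n) (Ns n.+1)) -> stable_from Ns N -> (N <= N')%N ->
  stable_from Ns N'.
Proof.
move=> chainNs stableN le_NN' n le_N'n x Nnx.
exact/(chain_mono chainNs le_NN')/stableN/Nnx/(leq_trans le_NN').
Qed.

Lemma noetherian_moduleP R M :
  noetherian_module R M <->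
  (forall Ns : nat -> T -> Prop, (forall n, is_submodule R M (Ns n)) ->
     (forall n, psubset (Ns n) (Ns n.+1)) -> exists N, stable_from Ns N).
Proof.
split=> noethM Ns subNs chainNs; have [N stableN] := noethM Ns subNs chainNs.
  by exists N => n le_Nn x /(stableN n le_Nn x).
by exists N => n le_Nn x; split; [apply: stableN|apply: chain_mono].
Qed.

Lemma noetherian_module_scalars R R' M :
  psubset R R' -> noetherian_module R M -> noetherian_module R' M.
Proof.
move=> RR' noethM Ns subNs; apply: noethM => n.
by case: (subNs n) => ? ? ? ZN; split=> // r x /RR'; apply: ZN.
Qed.

Lemma noetherian_module_sub R M M' :
  psubset M M' -> noetherian_module R M' -> noetherian_module R M.
Proof.
move=> MM' noethM' Ns subNs; apply: noethM' => n.
by case: (subNs n) => NM ? ? ?; split=> // x /NM /MM'.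
Qed.

Lemma noetherian_ints : noetherian_module ints ints.
Proof.
apply/noetherian_moduleP => Ns subNs chainNs.
have Ns_int n x : Ns n x -> exists k : int, x = k%:~R by move/(submodule_sub (subNs n)).
(* The least positive integer [d] occurring in the chain lies in some stage [N];
   from then on, every stage consists of multiples of [d]. *)
pose D m := (0 < m)%N /\ exists n, Ns n m%:R.
case: (classic (exists m, D m)) => [/ex_least_nat [d [[d_gt0 [N Nd]] d_min]]|noD].
  exists N => n le_Nn x Nnx; have [k xk] := Ns_int n x Nnx.
  move: Nnx; rewrite xk !(submodule_absz (subNs _)); set m := absz k => Nnm.
  have Nnd : Ns n d%:R by apply: chain_mono Nd.
  have Nn_mod : Ns n (m %% d)%N%:R.
    have -> : (m %% d)%N%:R = m%:R - (m %/ d)%N%:~R * d%:R :> T.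
      by rewrite {2}(divn_eq m d) natrD natrM addrAC subrr add0r.
    apply: (submoduleB (subNs n)) Nnm _.
    exact: (submoduleZ (subNs n) (ex_intro _ (m %/ d)%N%:Z erefl) Nnd).
  have mod0 : (m %% d)%N = 0%N.
    apply/eqP; rewrite eqn0Ngt; apply/negP => mod_gt0.
    by have := d_min _ (conj mod_gt0 (ex_intro _ n Nn_mod)); rewrite leqNgt ltn_mod d_gt0.
  rewrite (divn_eq m d) mod0 addn0 natrM.
  exact: (submoduleZ (subNs N) (ex_intro _ (m %/ d)%N%:Z erefl) Nd).
exists 0%N => n _ x Nnx; have [k xk] := Ns_int n x Nnx.
move: Nnx; rewrite xk !(submodule_absz (subNs _)).
case: (posnP (absz k)) => [-> _|k_gt0 Nnk]; first exact: (submodule0 (subNs 0)).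
by case: noD; exists (absz k); split=> //; exists n.
Qed.

Section LinearSpanNoetherian.
Variables (A : T -> Prop) (x : T) (xs : seq T) (Ns : nat -> T -> Prop).
Hypotheses (subA : is_subring A)
  (subNs : forall n, is_submodule A (lspan A (x :: xs)) (Ns n))
  (chainNs : forall n, psubset (Ns n) (Ns n.+1)).

Definition tail_chain n : T -> Prop := fun m => lspan A xs m /\ Ns n m.
Definition head_chain n : T -> Prop :=
  fun a => A a /\ exists m, lspan A xs m /\ Ns n (a * x + m).

Lemma tail_chain_submodule n : is_submodule A (lspan A xs) (tail_chain n).
Proof.
split=> [m []//||m m' [Mm Nm] [Mm' Nm']|r m Ar [Mm Nm]].
- by split; [apply: lspan0|apply: (submodule0 (subNs n))].
- by split; [apply: lspanB|exact: (submoduleB (subNs n) Nm Nm')].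
- by split; [apply: lspanZ|exact: (submoduleZ (subNs n) Ar Nm)].
Qed.

Lemma head_chain_submodule n : is_submodule A A (head_chain n).
Proof.
split=> [a []//||a a' [Aa [m [Mm Nm]]] [Aa' [m' [Mm' Nm']]]|r a Ar [Aa [m [Mm Nm]]]].
- split; first exact: subring0.
  by exists 0; rewrite mul0r addr0; split; [apply: lspan0|apply: (submodule0 (subNs n))].
- split; first exact: subringB.
  exists (m - m'); rewrite mulrBl addrACA -opprD; split; first exact: lspanB.
  exact: (submoduleB (subNs n) Nm Nm').
- split; first exact: subringM.
  exists (r * m); rewrite -mulrA -mulrDr; split; first exact: lspanZ.
  exact: (submoduleZ (subNs n) Ar Nm).
Qed.

Lemma tail_chain_mono n : psubset (tail_chain n) (tail_chain n.+1).
Proof. by move=> m [Mm /chainNs]. Qed.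

Lemma head_chain_mono n : psubset (head_chain n) (head_chain n.+1).
Proof. by move=> a [Aa [m [Mm /chainNs Nm]]]; split=> //; exists m. Qed.

Lemma stable_from_head_tail N :
  stable_from tail_chain N -> stable_from head_chain N -> stable_from Ns N.
Proof.
move=> stable_tail stable_head n le_Nn y Nny.
have [a [m [Aa Mm Ey]]] := submodule_sub (subNs n) Nny; rewrite Ey in Nny *.
have [_ [m' [Mm' NNm']]] : head_chain N a.
  by apply: (stable_head n le_Nn); split=> //; exists m.
have [_ NNmm'] : tail_chain N (m - m').
  apply: (stable_tail n le_Nn); split; first exact: lspanB.
  have -> : m - m' = a * x + m - (a * x + m') by rewrite opprD addrACA subrr add0r.
  by apply: (submoduleB (subNs n) Nny _); apply: (chain_mono chainNs le_Nn).
have -> : a * x + m = a * x + m' + (m - m') by rewrite -addrA [m' + _]addrC subrK.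
exact: (submoduleD (subNs N) NNm' NNmm').
Qed.

End LinearSpanNoetherian.

Lemma noetherian_lspan A xs :
  is_subring A -> noetherian_module A A -> noetherian_module A (lspan A xs).
Proof.
move=> subA noethA; elim: xs => [|x xs IHxs]; apply/noetherian_moduleP => Ns subNs chainNs.
  exists 0%N => n _ y /(submodule_sub (subNs n)) /= ->; exact: (submodule0 (subNs 0)).
have [N1 stable_tail] := (noetherian_moduleP _ _).1 IHxs _
  (tail_chain_submodule subA subNs) (tail_chain_mono chainNs).
have [N2 stable_head] := (noetherian_moduleP _ _).1 noethA _
  (head_chain_submodule subA subNs) (head_chain_mono chainNs).
exists (maxn N1 N2); apply: (stable_from_head_tail subA subNs chainNs).
- exact: (stable_from_le (tail_chain_mono chainNs) stable_tail (leq_maxl _ _)).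
- exact: (stable_from_le (head_chain_mono chainNs) stable_head (leq_maxr _ _)).
Qed.

Definition adjoin A (s : T) : T -> Prop :=
  fun y => exists2 p : {poly T}, (forall i, A p`_i) & y = p.[s].

Section Adjoin.
Variables (A : T -> Prop) (s : T).
Hypothesis subA : is_subring A.

Lemma adjoin_base a : A a -> adjoin A s a.
Proof.
move=> Aa; exists a%:P; last by rewrite hornerC.
by move=> i; rewrite coefC; case: eqP => _; [|apply: subring0].
Qed.

Lemma adjoin_gen : adjoin A s s.
Proof.
exists 'X; last by rewrite hornerX.
by move=> i; rewrite coefX; case: eqP => _; [apply: subring1|apply: subring0].
Qed.

Lemma adjoinB x y : adjoin A s x -> adjoin A s y -> adjoin A s (x - y).
Proof.
move=> [p Ap ->] [q Aq ->]; exists (p - q); last by rewrite hornerD hornerN.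
by move=> i; rewrite coefB; apply: subringB.
Qed.

Lemma adjoin_min S : is_subring S -> psubset A S -> S s -> psubset (adjoin A s) S.
Proof.
move=> subS AS Ss _ [p Ap ->]; rewrite horner_coef.
by apply: subring_sum => // i _; apply: subringM (AS _ (Ap i)) (subringX subS _ Ss).
Qed.

Hypotheses (centralA : forall a, A a -> central a) (central_s : central s).

Lemma adjoin_central y : adjoin A s y -> central y.
Proof. exact: adjoin_min is_subring_central centralA central_s y. Qed.

Lemma adjoinM x y : adjoin A s x -> adjoin A s y -> adjoin A s (x * y).
Proof.
move=> [p Ap ->] [q Aq ->]; exists (p * q); last by rewrite hornerM_comm.
by move=> i; rewrite coefM; apply: subring_sum => // j _; apply: subringM.
Qed.

Lemma central_subring_adjoin : central_subring (adjoin A s).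
Proof.
split; last exact: adjoin_central.
split; first exact: (adjoin_base (subring1 subA)).
by move=> x y Ax Ay; split; [apply: adjoinB|apply: adjoinM].
Qed.

End Adjoin.

Lemma grid_stable (L : nat -> nat -> T -> Prop) :
  (forall n n' d d', (n <= n')%N -> (d <= d')%N -> psubset (L n d) (L n' d')) ->
  (exists N, stable_from (fun n => L n n) N) ->
  (forall d, exists N, stable_from (L ^~ d) N) ->
  exists N, forall d, stable_from (L ^~ d) N.
Proof.
move=> monoL [N0 stable_diag] stable_col.
have chain_col d n : psubset (L n d) (L n.+1 d) by apply: monoL.
have [N1 stable_low] : exists N, forall d, (d < N0)%N -> stable_from (L ^~ d) N.
  elim: N0 {stable_diag} => [|m [N stableN]]; first by exists 0%N.
  have [Nm stable_m] := stable_col m; exists (maxn N Nm) => d; rewrite ltnS leq_eqVlt.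
  case/predU1P => [->|/stableN stable_d].
    exact: stable_from_le (chain_col m) stable_m (leq_maxr _ _).
  exact: stable_from_le (chain_col d) stable_d (leq_maxl _ _).
exists (maxn N0 N1) => d n le_Nn; case: (ltnP d N0) => [/stable_low stable_d|le_N0d].
  exact: stable_from_le (chain_col d) stable_d (leq_maxr _ _) n le_Nn.
move=> x Lx; apply: (monoL N0 _ N0); [exact: leq_maxl|exact: le_N0d|].
apply: (stable_diag (maxn n d)); first by rewrite leq_max le_N0d orbT.
by apply: monoL Lx; [apply: leq_maxl|apply: leq_maxr].
Qed.

Section Hilbert.
Variables (A : T -> Prop) (s : T) (Is : nat -> T -> Prop).
Hypotheses (csubA : central_subring A) (central_s : central s)
  (noethA : noetherian_module A A)
  (subIs : forall n, is_submodule (adjoin A s) (adjoin A s) (Is n))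
  (chainIs : forall n, psubset (Is n) (Is n.+1)).

Let subA := csubA.1.

Definition lead_coefs (n d : nat) : T -> Prop :=
  fun a => exists p : {poly T}, [/\ forall i, A p`_i, (size p <= d.+1)%N, p`_d = a & Is n p.[s]].

Lemma lead_coefs_submodule n d : is_submodule A A (lead_coefs n d).
Proof.
split=> [_ [p [Ap _ <- _]] //||_ _ [p [Ap sp <- Ip]] [q [Aq sq <- Iq]]|r _ Ar [p [Ap sp <- Ip]]].
- exists 0; rewrite coef0 horner0 size_poly0; split=> // [i|].
    by rewrite coef0; apply: subring0.
  exact: (submodule0 (subIs n)).
- exists (p - q); split.
  4: by rewrite hornerD hornerN; apply: (submoduleB (subIs n)).
  + by move=> i; rewrite coefB; apply: subringB.
  + apply/leq_sizeP => j le_dj; rewrite coefB.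
    by rewrite (leq_sizeP _ _ sp j le_dj) (leq_sizeP _ _ sq j le_dj) subrr.
  + by rewrite coefB.
- exists (r *: p); split.
  4: by rewrite hornerZ; apply: (submoduleZ (subIs n) (adjoin_base s subA Ar)).
  + by move=> i; rewrite coefZ; apply: subringM.
  + exact: leq_trans (size_scale_leq _ _) sp.
  + by rewrite coefZ.
Qed.

Lemma lead_coefs_mono n n' d d' :
  (n <= n')%N -> (d <= d')%N -> psubset (lead_coefs n d) (lead_coefs n' d').
Proof.
move=> le_nn' /subnK <-; elim: (d' - d)%N => [|k IHk] a.
  by move=> [p [Ap sp pd Ip]]; exists p; split=> //; apply: (chain_mono chainIs le_nn').
move=> /IHk [p [Ap sp pd Ip]]; exists (p * 'X); split.
- by move=> i; rewrite coefMX; case: eqP => _; [apply: subring0|].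
- apply/leq_sizeP => j; rewrite coefMX; case: eqP => // _ le_j.
  by apply/(leq_sizeP _ _ sp); rewrite -ltnS (ltn_predK le_j).
- by rewrite coefMX addSn.
- by rewrite hornerMX -central_s; apply: (submoduleZ (subIs n') (adjoin_gen s subA)).
Qed.

Lemma lead_coefs_stable : exists N, forall d, stable_from (lead_coefs ^~ d) N.
Proof.
apply: grid_stable; first exact: lead_coefs_mono.
  apply: (noetherian_moduleP _ _).1 noethA _ (fun n => lead_coefs_submodule n n) _.
  by move=> n; apply: lead_coefs_mono.
move=> d; apply: (noetherian_moduleP _ _).1 noethA _ (fun n => lead_coefs_submodule n d) _.
by move=> n; apply: lead_coefs_mono.
Qed.

Lemma adjoin_chain_stable : exists N, stable_from Is N.
Proof.
have [N stable_lead] := lead_coefs_stable; exists N => n le_Nn y.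
move=> /[dup] /(submodule_sub (subIs n)) [p Ap ->].
elim: (size p) {-2}p (leqnn (size p)) Ap => [|k IHk] {}p sp Ap Ip.
  move: sp; rewrite leqn0 size_poly_eq0 => /eqP ->.
  by rewrite horner0; apply: (submodule0 (subIs N)).
have [q [Aq sq qk Iq]] : lead_coefs N k p`_k by apply: stable_lead le_Nn _ _; exists p.
have Ipq : Is N (p - q).[s].
  apply: IHk; last 1 first.
  - rewrite hornerD hornerN; apply: (submoduleB (subIs n) Ip).
    exact: (chain_mono chainIs le_Nn).
  - apply/leq_sizeP => j; rewrite leq_eqVlt coefB => /predU1P [<-|lt_kj]; first by rewrite qk subrr.
    by rewrite (leq_sizeP _ _ sp j lt_kj) (leq_sizeP _ _ sq j lt_kj) subrr.
  - by move=> i; rewrite coefB; apply: subringB.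
by rewrite -(subrK q p) hornerD; apply: (submoduleD (subIs N)).
Qed.

End Hilbert.

Lemma noetherian_adjoin A s : central_subring A -> central s ->
  noetherian_module A A -> noetherian_module (adjoin A s) (adjoin A s).
Proof.
move=> csubA central_s noethA; apply/noetherian_moduleP => Is subIs chainIs.
exact: (adjoin_chain_stable csubA central_s noethA subIs chainIs).
Qed.

Lemma adjoin_quadratic_lspan A k al be : is_subring A -> A al -> A be ->
  k * k = al * k - be -> psubset (adjoin A k) (lspan A [:: 1; k]).
Proof.
move=> subA Aal Abe kk.
have pow i : exists a b, [/\ A a, A b & k ^+ i = a + b * k].
  elim: i => [|i [a [b [Aa Ab ki]]]].
    by exists 1, 0; rewrite expr0 mul0r addr0; split; [apply: subring1|apply: subring0|].
  exists (- (b * be)), (a + b * al); split.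
  - by apply: subringN => //; apply: subringM.
  - by apply: subringD => //; apply: subringM.
  - by rewrite exprSr ki mulrDl -mulrA kk mulrBr mulrA mulrDl addrA addrC.
move=> _ [p Ap ->]; rewrite horner_coef; apply: lspan_sum => // i _.
have [a [b [Aa Ab ->]]] := pow i; apply: lspanZ => //.
exists a, (b * k); rewrite mulr1; split=> //.
by exists b, 0; rewrite addr0.
Qed.

Definition adjoins A (ks : seq T) : T -> Prop := foldl adjoin A ks.

Lemma adjoins_min A ks S : is_subring S -> psubset A S -> (forall k, k \in ks -> S k) ->
  psubset (adjoins A ks) S.
Proof.
move=> subS; elim: ks A => [|k ks IHks] A //= AS ks_S; apply: IHks.
  by apply: adjoin_min => //; apply/ks_S/mem_head.
by move=> k' ks_k'; apply/ks_S/mem_behead.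
Qed.

Lemma central_subring_adjoins A ks : central_subring A ->
  (forall k, k \in ks -> central k) -> central_subring (adjoins A ks).
Proof.
elim: ks A => [|k ks IHks] A //= csubA central_kks.
apply: IHks => [|k' ks_k']; last by apply: central_kks; apply: mem_behead.
exact: central_subring_adjoin csubA.1 csubA.2 (central_kks _ (mem_head _ _)).
Qed.

Lemma noetherian_adjoins A ks : central_subring A -> (forall k, k \in ks -> central k) ->
  noetherian_module A A -> noetherian_module (adjoins A ks) (adjoins A ks).
Proof.
elim: ks A => [|k ks IHks] A //= csubA central_kks noethA.
have central_k := central_kks _ (mem_head _ _).
apply: IHks => [|k' ks_k'|].
- exact: central_subring_adjoin csubA.1 csubA.2 central_k.
- by apply: central_kks; apply: mem_behead.
- exact: (noetherian_adjoin csubA central_k noethA).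
Qed.

Lemma adjoins_base A ks : central_subring A -> (forall k, k \in ks -> central k) ->
  psubset A (adjoins A ks).
Proof.
elim: ks A => [|k ks IHks] A csubA central_kks a Aa //=.
apply: IHks => [|k' ks_k'|].
- exact: central_subring_adjoin csubA.1 csubA.2 (central_kks _ (mem_head _ _)).
- by apply: central_kks; apply: mem_behead.
- exact: (adjoin_base k csubA.1 Aa).
Qed.

Lemma adjoins_mem A ks k : central_subring A -> (forall k, k \in ks -> central k) ->
  k \in ks -> adjoins A ks k.
Proof.
elim: ks A => [|k0 ks IHks] A //= csubA central_kks.
have csubAk0 := central_subring_adjoin csubA.1 csubA.2 (central_kks _ (mem_head _ _)).
have central_ks k' : k' \in ks -> central k' by move=> ks_k'; apply: central_kks; apply: mem_behead.
rewrite inE => /predU1P [->|ks_k]; last exact: IHks.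
exact: adjoins_base csubAk0 central_ks _ (adjoin_gen k0 csubA.1).
Qed.

Lemma adjoins_lspan A ks : central_subring A ->
  (forall k, k \in ks -> central k /\ exists al be, [/\ A al, A be & k * k = al * k - be]) ->
  exists xs, psubset (adjoins A ks) (lspan A xs).
Proof.
elim: ks A => [|k ks IHks] A /= csubA quad_kks.
  by exists [:: 1] => y Ay; exists y, 0; rewrite mulr1 addr0.
have [central_k [al [be [Aal Abe kk]]]] := quad_kks _ (mem_head _ _).
have [xs Akxs] : exists xs, psubset (adjoins (adjoin A k) ks) (lspan (adjoin A k) xs).
  apply: IHks => [|k' ks_k']; first exact: central_subring_adjoin csubA.1 csubA.2 central_k.
  have [central_k' [al' [be' [Aal' Abe' kk']]]] := quad_kks k' (@mem_behead _ (k :: ks) _ ks_k').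
  by split=> //; exists al', be'; split=> //; apply: (adjoin_base k csubA.1).
exists [seq x * y | y <- xs, x <- [:: 1; k]] => y /Akxs; apply: lspan_trans.
exact: adjoin_quadratic_lspan csubA.1 Aal Abe kk.
Qed.

End Subrings.

Section Involution.
Variables (T : nzRingType) (bar : T -> T).
Hypothesis inv_bar : is_involution bar.
Implicit Types (C S : T -> Prop) (x y : T).

Lemma barD x y : bar (x + y) = bar x + bar y. Proof. by case: inv_bar. Qed.
Lemma barM x y : bar (x * y) = bar y * bar x. Proof. by case: inv_bar. Qed.
Lemma barK x : bar (bar x) = x. Proof. by case: inv_bar. Qed.
Lemma bar0 : bar 0 = 0. Proof. by apply: (addrI (bar 0)); rewrite -barD !addr0. Qed.
Lemma barN x : bar (- x) = - bar x.
Proof. by apply/eqP; rewrite -subr_eq0 opprK -barD addNr bar0. Qed.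
Lemma barB x y : bar (x - y) = bar x - bar y. Proof. by rewrite barD barN. Qed.
Lemma bar1 : bar 1 = 1.
Proof. by have := barM (bar 1) 1; rewrite mulr1 !barK mulr1 => /esym. Qed.

Lemma central_bar c : central c -> central (bar c).
Proof. by move=> central_c y; rewrite -[y]barK -!barM central_c. Qed.

Lemma is_subring_bar_preimage S : is_subring S -> is_subring (fun x => S (bar x)).
Proof.
move=> subS; split=> [|x y Sx Sy]; first by rewrite bar1; apply: subring1.
by rewrite barB barM; split; [apply: subringB|apply: subringM].
Qed.

Lemma lspan_bar C M xs : (forall c, C c -> central c /\ C (bar c)) ->
  is_submodule C M M -> (forall x, x \in xs -> M (bar x)) ->
  forall y, lspan C xs y -> M (bar y).
Proof.
move=> C_bar subM; elim: xs => [|x xs IHxs] M_bar y /=.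
  by move=> ->; rewrite bar0; apply: (submodule0 subM).
move=> [a [m [Ca Mm ->]]]; have [central_a C_bara] := C_bar a Ca.
rewrite barD barM -(central_bar central_a); apply: (submoduleD subM).
  by apply: (submoduleZ subM C_bara); apply/M_bar/mem_head.
by apply: IHxs Mm => x' xs_x'; apply/M_bar/mem_behead.
Qed.

Section NormSums.
Variable C : T -> Prop.
Hypothesis csubC : central_subring C.

Let subC := csubC.1.

Lemma norm_sums_norm c : C c -> norm_sums bar C (c * bar c).
Proof.
by move=> Cc; exists [:: (false, c)]; rewrite big_seq1 expr0 mul1r; split=> // p /[!inE] /eqP ->.
Qed.

Lemma norm_sumsB x y : norm_sums bar C x -> norm_sums bar C y -> norm_sums bar C (x - y).
Proof.
move=> [sx [Csx ->]] [sy [Csy ->]]; exists (sx ++ [seq (~~ p.1, p.2) | p <- sy]); split.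
  by move=> p; rewrite mem_cat => /orP [/Csx|/mapP [q /Csy Cq ->]].
rewrite big_cat big_map -sumrN; congr (_ + _); apply: eq_bigr => -[b c] _ /=.
by case: b; rewrite ?expr0 ?expr1 ?mulN1r ?mul1r ?opprK.
Qed.

Lemma norm_sumsM x y : norm_sums bar C x -> norm_sums bar C y -> norm_sums bar C (x * y).
Proof.
move=> [sx [Csx ->]] [sy [Csy ->]].
exists [seq (p.1 (+) q.1, p.2 * q.2) | p <- sx, q <- sy]; split.
  by move=> _ /allpairsP [[p q] [/Csx Cp /Csy Cq ->]]; apply: subringM.
rewrite big_allpairs_dep mulr_suml; apply: eq_big_seq => -[a c] /Csx /csubC.2 central_c.
rewrite mulr_sumr; apply: eq_big_seq => -[b d] /Csy /csubC.2 central_d /=.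
have -> : c * d * bar (c * d) = c * bar c * (d * bar d).
  by rewrite barM -mulrA [d * _]mulrA -(central_bar central_c) mulrA.
rewrite signr_addb -!mulrA; congr (_ * _).
by case: (b); rewrite ?expr0 ?mul1r // expr1 !mulN1r !mulrN.
Qed.

Lemma norm_sums_subring : is_subring (norm_sums bar C).
Proof.
split=> [|x y Nx Ny]; last by split; [apply: norm_sumsB|apply: norm_sumsM].
by have := norm_sums_norm (subring1 subC); rewrite bar1 mulr1.
Qed.

Lemma norm_sums_trace c : C c -> norm_sums bar C (c + bar c).
Proof.
move=> Cc; have C1c : C (1 + c) by apply: subringD (subring1 subC) Cc.
have expand : (1 + c) * bar (1 + c) = 1 * bar 1 + (c + bar c) + c * bar c.
  by rewrite barD bar1 mulrDl !mul1r mulrDr mulr1 !addrA [1 + bar c + c]addrAC.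
have -> : c + bar c = (1 + c) * bar (1 + c) - c * bar c - 1 * bar 1.
  by rewrite expand addrK [1 * _ + _]addrC addrK.
apply: norm_sumsB; last exact: (norm_sums_norm (subring1 subC)).
by apply: norm_sumsB; apply: norm_sums_norm.
Qed.

End NormSums.

Section Exhaustion.
Variables (lambda : T) (n : nat) (g : 'I_n -> T) (coef : T -> 'I_n -> T).
Hypothesis coefP :
  forall x, (forall i, central (coef x i)) /\ x = \sum_(i < n) coef x i * g i.

Definition gens := [seq g i | i <- index_enum 'I_n].

(* The coordinates of the [g i * g k] and of the [bar (g i)] are what make
   [Ts s] closed under products and under [bar]. *)
Definition seeds (s : seq T) : seq T := s ++ [:: 1; lambda] ++
  [seq g i * g k | i <- index_enum 'I_n, k <- index_enum 'I_n] ++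
  [seq bar (g i) | i <- index_enum 'I_n].

Definition coords s := [seq coef x i | x <- seeds s, i <- index_enum 'I_n].

Definition scalars s := coords s ++ map bar (coords s).

Definition Cs s := adjoins (@ints T) (scalars s).

Definition Ts (s : seq T) := lspan (Cs s) gens.

Lemma scalarsP s y :
  reflect (exists2 x, x \in seeds s & exists i, y = coef x i \/ y = bar (coef x i))
    (y \in scalars s).
Proof.
apply: (iffP idP).
  rewrite mem_cat => /orP [/allpairsP [[x i] [sx _ ->]]|/mapP [_ /allpairsP [[x i] [sx _ ->]] ->]].
    by exists x => //; exists i; left.
  by exists x => //; exists i; right.
move=> [x sx [i Ey]]; have coords_coef : coef x i \in coords s.
  exact: (allpairs_f coef sx (mem_index_enum i)).
by case: Ey => ->; rewrite mem_cat ?coords_coef ?map_f ?orbT.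
Qed.

Lemma central_scalars s k : k \in scalars s -> central k.
Proof.
by move=> /scalarsP [x _ [i [->|->]]]; [|apply: central_bar]; apply: (coefP x).1.
Qed.

Lemma scalars_bar s k : k \in scalars s -> bar k \in scalars s.
Proof.
move=> /scalarsP [x sx [i Ek]]; apply/scalarsP; exists x => //; exists i.
by case: Ek => ->; [right|left; rewrite barK].
Qed.

Lemma central_subring_Cs s : central_subring (Cs s).
Proof. exact: (central_subring_adjoins (central_subring_ints T) (@central_scalars s)). Qed.

Lemma Cs_scalars s k : k \in scalars s -> Cs s k.
Proof. exact: (adjoins_mem (central_subring_ints T) (@central_scalars s)). Qed.

Lemma Cs_bar s c : Cs s c -> Cs s (bar c).
Proof.
have subCs := (central_subring_Cs s).1; have subCs_bar := is_subring_bar_preimage subCs.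
apply: (adjoins_min subCs_bar) => [|k /scalars_bar]; [exact: ints_min|exact: Cs_scalars].
Qed.

Lemma Cs_mono s s' : {subset seeds s <= seeds s'} -> psubset (Cs s) (Cs s').
Proof.
have subCs' := (central_subring_Cs s').1.
move=> ss'; apply: (adjoins_min subCs') => [|k /scalarsP [x /ss' s'x [i Ek]]].
  exact: ints_min.
by apply/Cs_scalars/scalarsP; exists x => //; exists i.
Qed.

Lemma lspan_gens A (c : 'I_n -> T) : (forall i, A (c i)) ->
  lspan A gens (\sum_(i < n) c i * g i).
Proof.
move=> Ac; rewrite /gens; elim: (index_enum _) => [|i r IHr] /=; first by rewrite big_nil.
by rewrite big_cons; exists (c i), (\sum_(j <- r) c j * g j).
Qed.

Lemma Ts_seeds s x : x \in seeds s -> Ts s x.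
Proof.
move=> sx; have [_ ->] := coefP x.
apply: lspan_gens => i.
by apply/Cs_scalars/scalarsP; exists x => //; exists i; left.
Qed.

Lemma Ts_subring s : is_subring (Ts s).
Proof.
have subCs := (central_subring_Cs s).1.
split=> [|x y Tx Ty]; first by apply: Ts_seeds; rewrite !mem_cat mem_head orbT.
split; first exact: lspanB.
apply: (lspan_mul subCs (central_subring_Cs s).2 _ Tx Ty) => _ _ /mapP [i _ ->] /mapP [k _ ->].
have gik := allpairs_f (fun i k => g i * g k) (mem_index_enum i) (mem_index_enum k).
by apply: Ts_seeds; rewrite !mem_cat gik !orbT.
Qed.

Lemma Ts_bar s y : Ts s y -> Ts s (bar y).
Proof.
have [subCs central_Cs] := central_subring_Cs s.
apply: (lspan_bar (M := Ts s) _ (lspan_submodule subCs gens)) => [c Cc|_ /mapP [i _ ->]].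
  by split; [apply: central_Cs|apply: Cs_bar].
by apply: Ts_seeds; rewrite !mem_cat map_f ?mem_index_enum ?orbT.
Qed.

Lemma Cs_sub_Ts s : psubset (Cs s) (Ts s).
Proof.
move=> c Cc; rewrite -[c]mulr1; apply: lspanZ Cc (subring1 (Ts_subring s)).
exact: (central_subring_Cs s).1.
Qed.

Lemma Ts_mono s s' : {subset s <= s'} -> psubset (Ts s) (Ts s').
Proof.
move=> ss'; apply/lspan_scalars/Cs_mono => x.
by rewrite !mem_cat => /orP [/ss' ->|->]; rewrite ?orbT.
Qed.

Definition traces_norms s :=
  [seq k + bar k | k <- scalars s] ++ [seq k * bar k | k <- scalars s].

Definition base s := adjoins (@ints T) (traces_norms s).

Lemma central_traces_norms s a : a \in traces_norms s -> central a.
Proof.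
rewrite mem_cat => /orP [] /mapP [k /central_scalars central_k ->].
  exact: (subringD (is_subring_central T) central_k (central_bar central_k)).
exact: (subringM (is_subring_central T) central_k (central_bar central_k)).
Qed.

Lemma noetherian_base s : noetherian_module (base s) (base s).
Proof.
exact: (noetherian_adjoins (central_subring_ints T) (@central_traces_norms s) (@noetherian_ints T)).
Qed.

Lemma base_sub_norm_sums s : psubset (base s) (norm_sums bar (Cs s)).
Proof.
have subN := norm_sums_subring (central_subring_Cs s).
apply: (adjoins_min subN) => [|a]; first exact: ints_min.
rewrite mem_cat => /orP [] /mapP [k /Cs_scalars Ck ->].
  exact: (norm_sums_trace (central_subring_Cs s) Ck).
exact: (norm_sums_norm Ck).
Qed.

Lemma Cs_finite s : exists xs, psubset (Cs s) (lspan (base s) xs).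
Proof.
have csub_base := central_subring_adjoins (central_subring_ints T) (@central_traces_norms s).
have base_tn a : a \in traces_norms s -> base s a.
  exact: (adjoins_mem (central_subring_ints T) (@central_traces_norms s)).
have [xs base_xs] : exists xs, psubset (adjoins (base s) (scalars s)) (lspan (base s) xs).
  apply: (adjoins_lspan csub_base) => k sk; have central_k := central_scalars sk.
  split=> //; exists (k + bar k), (k * bar k); split.
  - by apply: base_tn; rewrite mem_cat (map_f (fun k => k + bar k) sk).
  - by apply: base_tn; rewrite mem_cat (map_f (fun k => k * bar k) sk) orbT.
  - by rewrite mulrDl (central_bar central_k) addrK.
exists xs => c Cc; apply: base_xs; move: c Cc.
have [subA _] := central_subring_adjoins csub_base (@central_scalars s).
apply: (adjoins_min subA) => [|k sk]; first exact: ints_min.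
exact: (adjoins_mem csub_base (@central_scalars s)).
Qed.

Lemma noetherian_Ts s : noetherian_module (norm_sums bar (Cs s)) (Ts s).
Proof.
have [xs Cs_xs] := Cs_finite s.
have [subB _] := central_subring_adjoins (central_subring_ints T) (@central_traces_norms s).
refine (noetherian_module_scalars (@base_sub_norm_sums s) _).
refine (noetherian_module_sub (M' := lspan (base s) [seq x * y | y <- gens, x <- xs]) _ _).
  by move=> y Ty; apply: lspan_trans Cs_xs Ty.
exact: (noetherian_lspan subB (@noetherian_base s)).
Qed.

End Exhaustion.
End Involution.

Theorem lemma4p13 (T : nzRingType) (bar : T -> T) (lambda : T) :
  almost_commutative T ->
  is_involution bar ->
  central lambda ->
  exists (Psi : Type) (Tj : Psi -> T -> Prop),
    (* directed family *)
    (forall i j : Psi, exists k : Psi, psubset (Tj i) (Tj k) /\ psubset (Tj j) (Tj k)) /\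
    (* whose union is T *)
    (forall x : T, exists j : Psi, Tj j x) /\
    forall j : Psi,
      [/\ is_subring (Tj j), inv_invariant bar (Tj j), Tj j lambda &
          exists C' : T -> Prop,
            [/\ is_subring C', in_center_of C' (Tj j) &
                noetherian_module (norm_sums bar C') (Tj j)]].
Proof.
move=> [n [g decomp]] inv_bar _.
have [coef coefP] := choice _ decomp.
have Ts_seeds' := Ts_seeds inv_bar (lambda := lambda) coefP.
have csubCs := central_subring_Cs inv_bar lambda coefP.
exists (seq T), (Ts bar lambda g coef); split.
  move=> i j; exists (i ++ j); split; apply: (Ts_mono inv_bar coefP) => x;
    by rewrite mem_cat => ->; rewrite ?orbT.
split=> [x|s]; first by exists [:: x]; apply: Ts_seeds'; rewrite mem_head.
split.
- exact: (Ts_subring inv_bar lambda coefP).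
- exact: (Ts_bar inv_bar coefP).
- by apply: Ts_seeds'; rewrite !mem_cat !inE eqxx !orbT.
- exists (Cs bar lambda g coef s); split; first exact: (csubCs s).1.
  + by split=> [|c Cc y _]; [apply: (Cs_sub_Ts inv_bar coefP)|apply: (csubCs s).2].
  + exact: (noetherian_Ts inv_bar coefP).
Qed.
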